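(* Let $A_1,A_2\in\mathbb{R}_{\max}^{n\times n}$ with $A_2<CSR[A_1]$, and let $A=A_1\oplus A_2$. Then $\lambda(A)=\lambda(A_1)$, $\mathrm{crit}(A)=\mathrm{crit}(A_1)$, $CS^tR[A]=CS^tR[A_1]$ for all $t\ge1$, and $T_1(A)=T_1(A_1)$.
   Context: Max-plus semiring $\mathbb{R}_{\max}=\mathbb{R}\cup\{-\infty\}$ with $a\oplus b=\max(a,b)$, $a\otimes b=a+b$; $(A\oplus B)_{ij}=\max(a_{ij},b_{ij})$, $(AB)_{ij}=\max_k(a_{ik}+b_{kj})$; $A^t$ is the $t$-th max-plus power, $A^0=I$. $\mathcal{D}(A)$ is the digraph on $\{1,\dots,n\}$ with arc $(i,j)$ of weight $a_{ij}$ whenever $a_{ij}\ne-\infty$; walks, length (number of arcs), weight (sum of arc weights), cycles as usual. $\lambda(A)$ is the maximal cycle mean ($-\infty$ if no cycle). $\mathrm{crit}(A)$ is the subgraph of all nodes and arcs of cycles attaining $\lambda(A)$; its nodes are critical. The cyclicity of $\mathrm{crit}(A)$ is the lcm over its strongly connected components of the gcd of their cycle lengths. CSR terms: if $\lambda=\lambda(A)\ne-\infty$, with $\gamma$ the cyclicity of $\mathrm{crit}(A)$, $A_\lambda$ equal to $A$ with $\lambda$ subtracted from every finite entry, $M=I\oplus N\oplus\dots\oplus N^{n-1}$ where $N=A_\lambda^\gamma$: $c_{ij}=m_{ij}$ if $j$ critical, else $-\infty$; $r_{ij}=m_{ij}$ if $i$ critical, else $-\infty$; $s_{ij}=a_{ij}$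 if $(i,j)$ is an arc of $\mathrm{crit}(A)$, else $-\infty$; $CS^tR[A]$ is the product $CS^tR$ and $CSR[A]=CS^1R[A]$. If $\lambda(A)=-\infty$, $CS^tR[A]$ is the all-$(-\infty)$ matrix. $B_N$ has $(B_N)_{ij}=-\infty$ if $i$ or $j$ is critical and $a_{ij}$ otherwise. $T_1(A)$ is the least $T\ge0$ with $A^t=CS^tR[A]\oplus B_N^t$ for all $t\ge T$. Strict order: for matrices $X,Y$, $X<Y$ means $x_{ij}\le y_{ij}$ for all $i,j$, with $x_{ij}=y_{ij}$ only if both equal $-\infty$. *)

(* Max-plus matrices over R_max = R ∪ {-oo}, modelled with
   option R (None = -oo), for an arbitrary real (ordered) field R. *)
From HB Require Import structures.
From mathcomp Require Import all_boot all_order all_algebra.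
Set Implicit Arguments. Unset Strict Implicit. Unset Printing Implicit Defensive.
Import Order.TTheory GRing.Theory Num.Theory.
Local Open Scope ring_scope.

Section MaxPlus.
Variable R : realFieldType.

Definition mpadd (a b : option R) : option R :=
  match a, b with
  | Some x, Some y => Some (Num.max x y)
  | Some x, None => Some x
  | None, _ => b
  end.
Definition mpmul (a b : option R) : option R :=
  match a, b with
  | Some x, Some y => Some (x + y)
  | _, _ => None
  end.
Definition mple (a b : option R) : bool :=
  match a, b with
  | None, _ => true
  | Some _, None => false
  | Some x, Some y => x <= y
  end.

Variable n : nat.
Definition mpmx := 'I_n -> 'I_n -> option R.

Definition mxadd (A B : mpmx) : mpmx := fun i j => mpadd (A i j) (B i j).
Definition mxmul (A B : mpmx) : mpmx :=
  fun i j => \big[mpadd/None]_(k < n) mpmul (A i k) (B k j).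
Definition mxI : mpmx := fun i j => if i == j then Some 0 else None.
Definition mxbot : mpmx := fun _ _ => None.
Definition mxpow (A : mpmx) (t : nat) : mpmx := iter t (mxmul A) mxI.

Definition mxlt (X Y : mpmx) : Prop :=
  forall i j, mple (X i j) (Y i j) /\ (X i j = Y i j -> X i j = None).

Definition arcA (A : mpmx) : rel 'I_n := fun i j => A i j != None.

(* A cycle of a digraph e is a nonempty sequence of pairwise distinct nodes
   [i_0; ...; i_{k-1}] with arcs (i_m, i_{m+1 mod k}); its length is k. *)
Definition arcs (c : seq 'I_n) : seq ('I_n * 'I_n) := zip c (rot 1 c).
Definition is_cycle (e : rel 'I_n) (c : seq 'I_n) : bool :=
  [&& 0 < size c, uniq c & all (fun p => e p.1 p.2) (arcs c)]%N.
Definition weight (A : mpmx) (c : seq 'I_n) : R :=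
  \sum_(p <- arcs c) odflt 0 (A p.1 p.2).
Definition cmean (A : mpmx) (c : seq 'I_n) : R := weight A c / (size c)%:R.

(* lambda(A): maximal cycle mean, None (= -oo) if there is no cycle.
   Every cycle has length k+1 <= n, so we range over tuples. *)
Definition mplambda (A : mpmx) : option R :=
  \big[mpadd/None]_(k < n)
     \big[mpadd/None]_(t : (k.+1).-tuple 'I_n | is_cycle (arcA A) t)
        Some (cmean A t).

Definition crit_cycle (A : mpmx) (c : seq 'I_n) : bool :=
  is_cycle (arcA A) c && (mplambda A == Some (cmean A c)).

Definition crit_node (A : mpmx) (i : 'I_n) : bool :=
  [exists k : 'I_n, exists t : (k.+1).-tuple 'I_n,
     crit_cycle A t && (i \in (t : seq 'I_n))].
Definition crit_arc (A : mpmx) : rel 'I_n := fun i j =>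
  [exists k : 'I_n, exists t : (k.+1).-tuple 'I_n,
     crit_cycle A t && ((i, j) \in arcs t)].

Definition scc (e : rel 'I_n) (i j : 'I_n) : bool :=
  connect e i j && connect e j i.
Definition scc_gcd (e : rel 'I_n) (i : 'I_n) : nat :=
  \big[gcdn/0%N]_(k < n)
     \big[gcdn/0%N]_(t : (k.+1).-tuple 'I_n | is_cycle e t && all (scc e i) t)
        k.+1.
(* cyclicity of crit(A): lcm over the s.c.c. of crit(A) (each s.c.c. is
   represented by its critical nodes) of the gcd of their cycle lengths *)
Definition crit_cyclicity (A : mpmx) : nat :=
  \big[lcmn/1%N]_(i | crit_node A i) scc_gcd (crit_arc A) i.

Definition mxsubl (A : mpmx) (l : R) : mpmx :=
  fun i j => omap (fun x => x - l) (A i j).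
Definition csrM (A : mpmx) (l : R) : mpmx :=
  let N := mxpow (mxsubl A l) (crit_cyclicity A) in
  fun i j => \big[mpadd/None]_(k < n) mxpow N k i j.
Definition csrC (A : mpmx) (l : R) : mpmx :=
  fun i j => if crit_node A j then csrM A l i j else None.
Definition csrR (A : mpmx) (l : R) : mpmx :=
  fun i j => if crit_node A i then csrM A l i j else None.
Definition csrS (A : mpmx) : mpmx :=
  fun i j => if crit_arc A i j then A i j else None.

Definition CStR (A : mpmx) (t : nat) : mpmx :=
  match mplambda A with
  | None => mxbot
  | Some l => mxmul (mxmul (csrC A l) (mxpow (csrS A) t)) (csrR A l)
  end.
Definition CSR (A : mpmx) : mpmx := CStR A 1.

Definition BN (A : mpmx) : mpmx :=
  fun i j => if crit_node A i || crit_node A j then None else A i j.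

Definition csr_from (A : mpmx) (T : nat) : Prop :=
  forall t, (T <= t)%N -> forall i j,
    mxpow A t i j = mpadd (CStR A t i j) (mxpow (BN A) t i j).
Definition is_T1 (A : mpmx) (T : nat) : Prop :=
  csr_from A T /\ forall T', csr_from A T' -> (T <= T')%N.

End MaxPlus.

(* Arcs where [A] exceeds [A1] are arcs of [A2], and [a2_ij < CSR[A1]_ij]
   provides an [A1]-walk from [i] to [j] through a critical node, of length
   1 modulo the cyclicity [g] of crit(A1) and of strictly larger
   λ-normalized weight.  Replacing these arcs turns every walk of [A] into a
   walk of [A1] with the same ends, the same length modulo [g] and at least
   the same normalized weight, strictly larger (and through a critical node)
   as soon as one arc was replaced.  Hence no cycle of [A] beats λ(A1), the
   critical cycles of [A] and [A1] coincide, and so do the CS^tR terms, which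
   are the optimal normalized weights of walks of length t modulo [g] through
   critical nodes.  Finally every entry of [A^t] (resp. [B_N^t]) exceeding
   the corresponding entry of [A1^t] (resp. [B_N[A1]^t]) lies strictly below
   that of [CS^tR[A1]], so the CSR decomposition holds for [A] at time t exactly when
   it holds for [A1]. *)

From HB Require Import structures.
From mathcomp Require Import all_boot all_order all_algebra.
From Stdlib Require Import FunctionalExtensionality.
From mathcomp Require Import lra zify.
Set Implicit Arguments. Unset Strict Implicit. Unset Printing Implicit Defensive.
Import Order.TTheory GRing.Theory Num.Theory.
Local Open Scope ring_scope.

Section Scalars.
Variable R : realFieldType.
Implicit Types a b c : option R.

Lemma mple_refl a : mple a a.
Proof. by case: a => //= x; rewrite lexx. Qed.

Lemma mple_trans a b c : mple a b -> mple b c -> mple a c.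
Proof. by case: a; case: b; case: c => //= x y z; apply: le_trans. Qed.

Lemma mple_anti a b : mple a b -> mple b a -> a = b.
Proof. by case: a; case: b => //= x y h1 h2; congr Some; apply/eqP; rewrite eq_le h1 h2. Qed.

Lemma mpaddl a b : mple a (mpadd a b).
Proof. by case: a; case: b => //= x y; rewrite le_max lexx. Qed.

Lemma mpaddr a b : mple b (mpadd a b).
Proof. by case: a; case: b => //= x y; rewrite ?le_max lexx ?orbT. Qed.

Lemma mpadd_lub a b c : mple a c -> mple b c -> mple (mpadd a b) c.
Proof. by case: a; case: b; case: c => //= x y z h1 h2; rewrite ge_max h1 h2. Qed.

Lemma mpadd_mono a a' b b' : mple a a' -> mple b b' -> mple (mpadd a b) (mpadd a' b').
Proof.
move=> h1 h2; apply: mpadd_lub; first exact: mple_trans h1 (mpaddl _ _).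
exact: mple_trans h2 (mpaddr _ _).
Qed.

Lemma mple_mpadd y a b : mple (Some y) (mpadd a b) -> mple (Some y) a \/ mple (Some y) b.
Proof.
case: a => [x|]; case: b => [z|] //=; try by [left|right].
by rewrite le_max => /orP[]; [left|right].
Qed.

Lemma mpmul_mono a a' b b' : mple a a' -> mple b b' -> mple (mpmul a b) (mpmul a' b').
Proof. by case: a; case: a'; case: b; case: b' => //= x y z w h1 h2; apply: lerD. Qed.

Lemma mpmul_eqSome a b v :
  mpmul a b = Some v -> exists x y, [/\ a = Some x, b = Some y & v = x + y].
Proof. by case: a; case: b => //= x y [<-]; exists y, x. Qed.

Lemma mpmulA a b c : mpmul a (mpmul b c) = mpmul (mpmul a b) c.
Proof. by case: a; case: b; case: c => //= x y z; rewrite addrA. Qed.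

Definition dominated c a a1 :=
  forall x, a = Some x -> mple (Some x) a1 \/ exists2 v, c = Some v & x < v.

Lemma eq_mpadd_dominated a a1 b b1 c :
  mple a1 a -> mple b1 b -> mple b1 a1 -> mple b a ->
  dominated c a a1 -> dominated c b b1 -> a = mpadd c b <-> a1 = mpadd c b1.
Proof.
move=> a1a b1b b1a1 ba Ha Hb; split=> e.
- apply: mple_anti; last first.
    apply: mpadd_lub => //; case Ec: c => [v|] //.
    have : mple (Some v) a by rewrite e Ec; apply: mpaddl.
    case Ea: a => [x|] // vx.
    case: (Ha x Ea) => [|[v' ev' xv']]; first exact: mple_trans vx.
    by move: ev' xv' vx; rewrite Ec => -[<-] /= xv vx; move: (lt_le_trans xv vx); rewrite ltxx.
  case E1: a1 => [y|] //.
  have /mple_mpadd[hc|] : mple (Some y) (mpadd c b) by rewrite -E1 -e.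
    exact: mple_trans hc (mpaddl _ _).
  case Eb: b => [z|] // yz.
  case: (Hb z Eb) => [hz|[v ev zv]].
    exact: mple_trans (mple_trans yz hz) (mpaddr _ _).
  by rewrite ev; apply: mple_trans (mpaddl _ _); rewrite /= (le_trans yz (ltW zv)).
- apply: mple_anti; last first.
    by apply: mpadd_lub => //; apply: mple_trans a1a; rewrite e; apply: mpaddl.
  case Ea: a => [x|] //.
  case: (Ha x Ea) => [hx|[v ev xv]].
    by apply: mple_trans hx _; rewrite e; apply: mpadd_mono => //; apply: mple_refl.
  by rewrite ev; apply: mple_trans (mpaddl _ _); rewrite /= ltW.
Qed.

Section BigMpadd.
Variables (I : eqType) (r : seq I) (P : pred I) (F : I -> option R).

Lemma le_bigmpadd i : i \in r -> P i -> mple (F i) (\big[@mpadd R/None]_(j <- r | P j) F j).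
Proof.
elim: r => [|a r' IH] //=; rewrite in_cons big_cons => /orP[/eqP->|ir] Pi.
  by rewrite Pi; apply: mpaddl.
case: (P a); last exact: IH.
exact: mple_trans (IH ir Pi) (mpaddr _ _).
Qed.

Lemma bigmpadd_lub y : (forall i, i \in r -> P i -> mple (F i) y) ->
  mple (\big[@mpadd R/None]_(j <- r | P j) F j) y.
Proof.
elim: r => [|a r' IH] h; first by rewrite big_nil.
have IH' : mple (\big[@mpadd R/None]_(j <- r' | P j) F j) y.
  by apply: IH => i ir; apply: h; rewrite in_cons ir orbT.
rewrite big_cons; case Pa: (P a) => //.
by apply: mpadd_lub => //; apply: h => //; apply: mem_head.
Qed.

Lemma bigmpadd_eqSome v : \big[@mpadd R/None]_(j <- r | P j) F j = Some v ->
  exists i, [/\ i \in r, P i & F i = Some v].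
Proof.
elim: r v => [|a r' IH] v; first by rewrite big_nil.
rewrite big_cons; case Pa: (P a); last first.
  by move=> /IH [i [ir Pi Fi]]; exists i; rewrite in_cons ir orbT.
case Fa: (F a) => [x|]; case B: (\big[@mpadd R/None]_(j <- r' | P j) F j) => [y|] //=.
- move=> [<-]; rewrite /Num.max; case: ifP => _; last by exists a; rewrite mem_head.
  by have [i [ir Pi Fi]] := IH _ B; exists i; rewrite in_cons ir orbT.
- by move=> [<-]; exists a; rewrite mem_head.
- by move=> [<-]; have [i [ir Pi Fi]] := IH _ B; exists i; rewrite in_cons ir orbT.
Qed.

End BigMpadd.
End Scalars.

Lemma big_gcdn_gt0 (I : eqType) (r : seq I) (P : pred I) (F : I -> nat) i0 :
  i0 \in r -> P i0 -> (0 < F i0)%N -> (0 < \big[gcdn/0%N]_(i <- r | P i) F i)%N.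
Proof.
elim: r => [|a r IH] //; rewrite in_cons big_cons => /orP [/eqP <-|ir] Pi Fi.
  by rewrite Pi gcdn_gt0 Fi.
by case: (P a); rewrite ?gcdn_gt0 IH ?orbT.
Qed.

Lemma dvdn_mod_balance d a b s y t : (d %| a)%N -> (d %| y)%N ->
  (a + b + t = s + y)%N -> (s = t %[mod d])%N -> (d %| b)%N.
Proof.
move=> da dy e st; rewrite -(dvdn_addr _ da) /dvdn; apply/eqP.
have : ((a + b + t) %% d = t %% d)%N by rewrite e -modnDm st (eqP dy) addn0 modn_mod.
by move=> /eqP; rewrite -[u in (_ == u %% _)%N]add0n eqn_modDr mod0n => /eqP.
Qed.

Section Sequences.
Variable T : eqType.
Implicit Types s t : seq T.

Lemma zip_rconsl s t a : size s = size t -> zip (rcons s a) t = zip s t.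
Proof. by elim: s t => [|x s IH] [|y t] //= [/IH ->]. Qed.

Lemma zip_take s t m : zip (take m s) (take m t) = take m (zip s t).
Proof. by elim: s t m => [|x s IH] [|y t] [|m] //=; rewrite IH. Qed.

Lemma zip_drop s t m : zip (drop m s) (drop m t) = drop m (zip s t).
Proof. by elim: s t m => [|x s IH] [|y t] [|m] //=; rewrite ?IH //; case: (drop _ _). Qed.

Lemma zip_rot s t m : size s = size t -> zip (rot m s) (rot m t) = rot m (zip s t).
Proof. by move=> e; rewrite /rot zip_cat ?size_drop ?e // zip_take zip_drop. Qed.

Lemma path_all_zip (e : rel T) x s : path e x s = all (fun p => e p.1 p.2) (zip (x :: s) s).
Proof. by elim: s x => [|y s IH] x //=; rewrite IH. Qed.

Lemma last_take x s a : (a < size s)%N -> last x (take a.+1 s) = nth x s a.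
Proof.
elim: s x a => [|y s IH] x [|a] //= h; first by rewrite take0.
by rewrite IH // (set_nth_default x).
Qed.

Lemma split_at_mem i s k : k \in i :: s -> exists s1 s2, s = s1 ++ s2 /\ last i s1 = k.
Proof.
rewrite in_cons => /orP [/eqP ->|ks]; first by exists [::], s.
exists (take (index k s).+1 s), (drop (index k s).+1 s); rewrite cat_take_drop.
by rewrite last_take ?index_mem // nth_index.
Qed.

End Sequences.

Section Walks.
Variables (R : realFieldType) (n : nat).
Implicit Types (M : mpmx R n) (s : seq 'I_n).

Fixpoint walk_wt M x s : option R :=
  if s is y :: s' then mpmul (M x y) (walk_wt M y s') else Some 0.

Lemma walk_wt_cat M x s1 s2 :
  walk_wt M x (s1 ++ s2) = mpmul (walk_wt M x s1) (walk_wt M (last x s1) s2).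
Proof.
elim: s1 x => [|y s1 IH] x /=; last by rewrite IH mpmulA.
by case: (walk_wt M x s2) => //= a; rewrite add0r.
Qed.

Lemma le_walk_wt M1 M2 x s : (forall i j, mple (M1 i j) (M2 i j)) ->
  mple (walk_wt M1 x s) (walk_wt M2 x s).
Proof. by move=> h; elim: s x => [|y s IH] x /=; [rewrite lexx | apply: mpmul_mono]. Qed.

Lemma eq_walk_wt M1 M2 x s : (forall p, p \in zip (x :: s) s -> M1 p.1 p.2 = M2 p.1 p.2) ->
  walk_wt M1 x s = walk_wt M2 x s.
Proof.
elim: s x => [|y s IH] x //= h; rewrite (h (x, y)) ?mem_head // IH // => p ps.
by apply: h; rewrite in_cons ps orbT.
Qed.

Lemma walk_wt_restrict M1 M2 x s w : (forall i j, M1 i j = None \/ M1 i j = M2 i j) ->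
  walk_wt M1 x s = Some w -> walk_wt M2 x s = Some w.
Proof.
move=> h; elim: s x w => [|y s IH] x w //= /mpmul_eqSome [a [b [h1 h2 ->]]].
rewrite (IH _ _ h2); case: (h x y) => e; first by rewrite e in h1.
by rewrite -e h1.
Qed.

Lemma walk_wt_zip M x s : walk_wt M x s =
  if all (fun p => M p.1 p.2 != None) (zip (x :: s) s)
  then Some (\sum_(p <- zip (x :: s) s) odflt 0 (M p.1 p.2)) else None.
Proof.
elim: s x => [|y s IH] x /=; first by rewrite big_nil.
by rewrite IH big_cons; case: (M x y) => [a|] //=; case: (all _ _).
Qed.

Lemma walk_wt_subl M l x s :
  walk_wt (mxsubl M l) x s = omap (fun w => w - (size s)%:R * l) (walk_wt M x s).
Proof.
elim: s x => [|y s IH] x /=; first by rewrite mul0r subr0.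
rewrite IH /mxsubl; case: (M x y) => [a|] //=; case: (walk_wt M y s) => [b|] //=.
by congr Some; rewrite -addn1 natrD; lra.
Qed.

Lemma walk_wt_sublSome M l x s u :
  walk_wt (mxsubl M l) x s = Some u -> walk_wt M x s = Some (u + (size s)%:R * l).
Proof. by rewrite walk_wt_subl; case: (walk_wt M x s) => //= w [<-]; rewrite subrK. Qed.

Lemma mxmul_ge M1 M2 i k j : mple (mpmul (M1 i k) (M2 k j)) (mxmul M1 M2 i j).
Proof. exact: (le_bigmpadd (fun k => mpmul (M1 i k) (M2 k j)) (mem_index_enum _)). Qed.

Lemma mxmul_eqSome M1 M2 i j v : mxmul M1 M2 i j = Some v ->
  exists k x y, [/\ M1 i k = Some x, M2 k j = Some y & v = x + y].
Proof.
by rewrite /mxmul => /bigmpadd_eqSome [k [_ _ /mpmul_eqSome [x [y [h1 h2 h3]]]]]; exists k, x, y.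
Qed.

Lemma mxpow_ge_walk M t x s : size s = t -> mple (walk_wt M x s) (mxpow M t x (last x s)).
Proof.
elim: s x t => [|y s IH] x t /= <-; first by rewrite /mxpow /= /mxI eqxx /= lexx.
apply: mple_trans (mxmul_ge _ _ _ y _).
by apply: mpmul_mono; [apply: mple_refl | apply: IH].
Qed.

Lemma mxpow_walk M t x j v : mxpow M t x j = Some v ->
  exists s, [/\ size s = t, last x s = j & walk_wt M x s = Some v].
Proof.
elim: t x v => [|t IH] x v.
  by rewrite /mxpow /= /mxI; case: eqP => // <- [<-]; exists [::].
move=> /mxmul_eqSome [k [a [b [h1 /IH [s [h2 h3 h4] ->]]]]].
by exists (k :: s); rewrite /= h1 h4 h2 h3.
Qed.

Lemma le_mxpow M1 M2 t i j : (forall i j, mple (M1 i j) (M2 i j)) ->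
  mple (mxpow M1 t i j) (mxpow M2 t i j).
Proof.
move=> h; case E: (mxpow M1 t i j) => [v|] //.
have [s [hs <- hw]] := mxpow_walk E; rewrite -hw.
exact: mple_trans (le_walk_wt _ _ h) (mxpow_ge_walk _ _ hs).
Qed.

Lemma mxpow_pow_ge_walk M g q x s : size s = (g * q)%N ->
  mple (walk_wt M x s) (mxpow (mxpow M g) q x (last x s)).
Proof.
elim: q x s => [|q IH] x s hs.
  by move: hs; rewrite muln0 => /size0nil ->; rewrite /mxpow /= /mxI eqxx /= lexx.
rewrite -(cat_take_drop g s) walk_wt_cat last_cat.
apply: mple_trans (mxmul_ge _ _ _ (last x (take g s)) _).
apply: mpmul_mono; first by apply: mxpow_ge_walk; rewrite size_takel // hs mulnS leq_addr.
by apply: IH; rewrite size_drop hs mulnS addKn.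
Qed.

Lemma mxpow_pow_walk M g q x j v : mxpow (mxpow M g) q x j = Some v ->
  exists s, [/\ size s = (g * q)%N, last x s = j & walk_wt M x s = Some v].
Proof.
elim: q x v => [|q IH] x v.
  by rewrite /mxpow /= /mxI; case: eqP => // <- [<-]; exists [::]; rewrite muln0.
move=> /mxmul_eqSome [k [a [b [/mxpow_walk [s1 [e1 l1 w1]] /IH [s [h2 h3 h4] ->]]]]].
exists (s1 ++ s); rewrite size_cat e1 h2 mulnS last_cat l1 h3 walk_wt_cat w1 l1 h4.
by split.
Qed.

Lemma closed_walk_rep M k z K a : last k z = k -> walk_wt M k z = Some a ->
  [/\ last k (flatten (nseq K z)) = k, walk_wt M k (flatten (nseq K z)) = Some (K%:R * a),
      size (flatten (nseq K z)) = (K * size z)%N & {subset flatten (nseq K z) <= z}].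
Proof.
move=> lz wz; elim: K => [|K [l1 w1 s1 sub1]] /=; first by rewrite mul0r.
split.
- by rewrite last_cat lz l1.
- by rewrite walk_wt_cat lz w1 wz /= -addn1 natrD; congr Some; lra.
- by rewrite size_cat s1 mulSn.
- by move=> y; rewrite mem_cat => /orP [//|/sub1].
Qed.

Lemma size_uniq_ord s : uniq s -> (size s <= n)%N.
Proof. by move=> u; rewrite -(card_uniqP u) -[X in (_ <= X)%N]card_ord max_card. Qed.

End Walks.

Section CycleArcs.
Variable n : nat.
Implicit Types (s c : seq 'I_n).

Lemma perm_arcs_rot c m : perm_eq (arcs (rot m c)) (arcs c).
Proof. by rewrite /arcs rot_rot zip_rot ?size_rot // perm_rot. Qed.

Lemma arcs_cons x s : arcs (x :: s) = zip (x :: rcons s x) (rcons s x).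
Proof. by rewrite /arcs rot1_cons -rcons_cons zip_rconsl //= size_rcons. Qed.

Lemma closed_walk_arcs x s : last x s = x -> s != [::] -> perm_eq (zip (x :: s) s) (arcs s).
Proof.
case/lastP: s => [|s y] //; rewrite last_rcons => -> _.
by rewrite -arcs_cons -rot1_cons perm_sym; apply: perm_arcs_rot.
Qed.

Lemma cycle_closed_walk c x : x \in c -> exists z, [/\ perm_eq z c, last x z = x,
  size z = size c & perm_eq (zip (x :: z) z) (arcs c)].
Proof.
move=> xc; have := rot_index xc; set c' := (drop _ c ++ _) => e.
exists (rcons c' x); split.
- by rewrite -rot1_cons -e !perm_rot.
- by rewrite last_rcons.
- by rewrite -rot1_cons -e !size_rot.
- by rewrite -arcs_cons -e perm_arcs_rot.
Qed.

Lemma cycle_tuple (e : rel 'I_n) c : is_cycle e c ->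
  exists (k : 'I_n) (t : (k.+1).-tuple 'I_n), tval t = c.
Proof.
case/and3P=> sz u _; have kn : ((size c).-1 < n)%N by rewrite prednK // size_uniq_ord.
have ct : size c == (Ordinal kn).+1 by rewrite /= prednK.
by exists (Ordinal kn), (Tuple ct).
Qed.

Lemma cycle_connect (e : rel 'I_n) c x y : all (fun p => e p.1 p.2) (arcs c) ->
  x \in c -> y \in c -> connect e x y.
Proof.
move=> ha xc yc; have [z [pz lz sz az]] := cycle_closed_walk xc.
have pth : path e x z by rewrite path_all_zip (perm_all _ az).
have yz : y \in z by rewrite (perm_mem pz).
apply/connectP; exists (take (index y z).+1 z); first exact: take_path.
by rewrite last_take ?index_mem // nth_index.
Qed.

Lemma walk_wt_cycle (R : realFieldType) (M : mpmx R n) c x0 : is_cycle (arcA M) c ->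
  walk_wt M (last x0 c) c = Some (weight M c).
Proof.
case/and3P; case: c => [|y c] // _ _ ha.
have P := @closed_walk_arcs (last x0 (y :: c)) (y :: c) erefl isT.
by rewrite walk_wt_zip (perm_all _ P) (perm_big _ P) ha.
Qed.

End CycleArcs.

Section CycleMean.
Variables (R : realFieldType) (n : nat).
Implicit Types (M X : mpmx R n) (s : seq 'I_n).

Lemma walk_wt_loop_split M x s a b : (a <= b <= size s)%N ->
  last x (take a s) = last x (take b s) ->
  let y := last x (take a s) in
  let s1 := take a s in let s2 := drop a (take b s) in let s3 := drop b s in
  [/\ s = s1 ++ s2 ++ s3,
      walk_wt M x s = mpmul (walk_wt M x s1) (mpmul (walk_wt M y s2) (walk_wt M y s3)),
      last y s2 = y,
      walk_wt M x (s1 ++ s3) = mpmul (walk_wt M x s1) (walk_wt M y s3)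
    & last x (s1 ++ s3) = last x s].
Proof.
case/andP=> ab bs e y s1 s2 s3.
have e1 : take b s = s1 ++ s2 by rewrite /s1 -(take_takel s ab) cat_take_drop.
have eS : s = s1 ++ s2 ++ s3 by rewrite catA -e1 cat_take_drop.
have l2 : last y s2 = y by rewrite {2}/y e e1 last_cat.
split=> //.
- by rewrite {1}eS !walk_wt_cat -/s1 (_ : last x s1 = y) // l2.
- by rewrite walk_wt_cat.
- by rewrite [in RHS]eS !last_cat (_ : last x s1 = y) // l2.
Qed.

Lemma cmean_le_mplambda X c : is_cycle (arcA X) c -> mple (Some (cmean X c)) (mplambda X).
Proof.
move=> cy; have [k [t et]] := cycle_tuple cy; rewrite -et in cy *.
apply: mple_trans (le_bigmpadd (fun k : 'I_n => \big[@mpadd R/None]_(t : (k.+1).-tuple 'I_n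
  | is_cycle (arcA X) t) Some (cmean X t)) (mem_index_enum k) isT).
exact: (le_bigmpadd (fun t : (k.+1).-tuple 'I_n => Some (cmean X t)) (mem_index_enum t) cy).
Qed.

Lemma cmean_eq X l c : (0 < size c)%N -> (l == cmean X c) = (weight X c == (size c)%:R * l).
Proof.
move=> sz; have nz : (size c)%:R != 0 :> R by rewrite pnatr_eq0 -lt0n.
rewrite /cmean; apply/eqP/eqP => [->|->]; last by rewrite mulrAC divff ?mul1r.
by rewrite mulrC divfK.
Qed.

Variables (X : mpmx R n) (l : R).
Hypothesis hl : mplambda X = Some l.

Lemma cycle_weight_le c : is_cycle (arcA X) c -> weight X c <= (size c)%:R * l.
Proof.
move=> cy; have /and3P [sz _ _] := cy.
by move: (cmean_le_mplambda cy); rewrite hl /= /cmean ler_pdivrMr ?ltr0n // mulrC.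
Qed.

(* A closed walk decomposes into cycles: cut it at the first repeated node. *)
Lemma closed_walk_wt_le s x w : last x s = x -> walk_wt X x s = Some w -> w <= (size s)%:R * l.
Proof.
have [m] := ubnP (size s); elim: m s x w => [|m IH] s x w // hs hlst hw.
case: (boolP (uniq s)) => u.
  case: s hs hlst hw u => [|y s'] hs hlst hw u; first by move: hw => [<-]; rewrite mul0r.
  have P := closed_walk_arcs hlst isT.
  move: hw; rewrite walk_wt_zip (perm_all _ P) (perm_big _ P); case: ifP => // ha [<-].
  by apply: cycle_weight_le; apply/and3P.
have [a [b [ab bs e]]] := uniqPn x u.
have ab' : (a.+1 <= b.+1 <= size s)%N by rewrite ltnS ltnW.
have e' : last x (take a.+1 s) = last x (take b.+1 s) by rewrite !last_take // (ltn_trans ab).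
have [eS w1 l2 w2 l3] := walk_wt_loop_split X ab' e'.
set y := last x (take a.+1 s) in w1 l2 w2.
move: hw; rewrite w1 => /mpmul_eqSome [u1 [_ [h1 /mpmul_eqSome [u2 [u3 [h2 h3 ->]]] ->]]].
have sz : size s = (size (take a.+1 s) + size (drop a.+1 (take b.+1 s))
  + size (drop b.+1 s))%N by rewrite {1}eS !size_cat addnA.
have s2pos : (0 < size (drop a.+1 (take b.+1 s)))%N.
  by rewrite size_drop size_takel ?subn_gt0 // ltnW.
have s1sz : size (take a.+1 s) = a.+1 by rewrite size_takel // (ltn_trans ab bs).
have le2 : u2 <= (size (drop a.+1 (take b.+1 s)))%:R * l.
  by apply: (IH _ y u2 _ l2 h2); move: hs s2pos s1sz; rewrite sz; lia.
have le13 : u1 + u3 <= (size (take a.+1 s ++ drop b.+1 s))%:R * l.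
  apply: (IH _ x (u1 + u3) _ (etrans l3 hlst)); last by rewrite w2 h1 h3.
  by move: hs s2pos s1sz; rewrite sz size_cat; lia.
by move: le2 le13; rewrite size_cat sz !natrD; lra.
Qed.

Lemma closed_walk_wt_subl_le0 s x u :
  last x s = x -> walk_wt (mxsubl X l) x s = Some u -> u <= 0.
Proof. by move=> h /walk_wt_sublSome /(closed_walk_wt_le h); lra. Qed.

(* Pigeonhole on the endpoints of the first [n + 1] blocks of length [g]: a
   repetition cuts out a closed walk, of nonpositive normalized weight. *)
Lemma walk_shorten_blocks g q i s v : size s = (g * q)%N ->
  walk_wt (mxsubl X l) i s = Some v ->
  exists q' s', [/\ (q' < n)%N, size s' = (g * q')%N, last i s' = last i s
     & mple (Some v) (walk_wt (mxsubl X l) i s')].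
Proof.
have [m] := ubnP q; elim: m q s v => [|m IH] q s v // hq hs hw.
case: (ltnP q n) => qn; first by exists q, s; split=> //; rewrite hw /= lexx.
pose L := [seq last i (take (g * k) s) | k <- iota 0 q.+1].
have nu : ~~ uniq L by apply/negP => /size_uniq_ord; rewrite size_map size_iota; lia.
have [a [b [ab bq e]]] := uniqPn i nu.
rewrite size_map size_iota in bq.
rewrite !(nth_map 0%N) ?size_iota ?(ltn_trans ab) // !nth_iota ?(ltn_trans ab) // !add0n in e.
have ab' : (g * a <= g * b <= size s)%N by rewrite hs !leq_mul2l ltnW // -ltnS bq !orbT.
have [eS w1 l2 w2 l3] := walk_wt_loop_split (mxsubl X l) ab' e.
move: hw; rewrite w1 => /mpmul_eqSome [u1 [_ [h1 /mpmul_eqSome [u2 [u3 [h2 h3 ->]]] ->]]].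
have le2 := closed_walk_wt_subl_le0 l2 h2.
have c1 : (q - (b - a) < m)%N by move: hq ab bq; lia.
have c2 : size (take (g * a) s ++ drop (g * b) s) = (g * (q - (b - a)))%N.
  rewrite size_cat size_takel ?size_drop ?hs; last first.
    by rewrite -hs (leq_trans _ (proj2 (andP ab'))) // leq_mul2l ltnW ?orbT.
  by rewrite -mulnBr -mulnDr; congr (g * _)%N; move: ab bq; lia.
have c3 : walk_wt (mxsubl X l) i (take (g * a) s ++ drop (g * b) s) = Some (u1 + u3).
  by rewrite w2 h1 h3.
have [q' [s' [q'n s'sz s'l s'w]]] := IH _ _ _ c1 c2 c3.
exists q', s'; split=> //; first by rewrite s'l l3.
by apply: mple_trans s'w; rewrite /= lerD2l; lra.
Qed.

Local Notation g := (crit_cyclicity X).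

Lemma csrM_ge_pow q i j : mple (mxpow (mxpow (mxsubl X l) g) q i j) (csrM X l i j).
Proof.
case E: (mxpow _ q i j) => [v|] //.
have [s [hs <- hw]] := mxpow_pow_walk E.
have [q' [s' [q'n s'sz <- s'w]]] := walk_shorten_blocks hs hw.
apply: mple_trans s'w (mple_trans (mxpow_pow_ge_walk _ i s'sz) _).
exact: (le_bigmpadd (fun k : 'I_n => mxpow (mxpow (mxsubl X l) g) k i (last i s'))
  (mem_index_enum (Ordinal q'n)) isT).
Qed.

Lemma csrM_ge_walk i s w : (g %| size s)%N -> walk_wt X i s = Some w ->
  mple (Some (w - (size s)%:R * l)) (csrM X l i (last i s)).
Proof.
move=> gs hw; apply: mple_trans (csrM_ge_pow (size s %/ g) i _).
have e : size s = (g * (size s %/ g))%N by rewrite mulnC divnK.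
by apply: mple_trans (mxpow_pow_ge_walk _ _ e); rewrite walk_wt_subl hw /= lexx.
Qed.

Lemma csrM_walk i k c : csrM X l i k = Some c ->
  exists s, [/\ (g %| size s)%N, last i s = k & walk_wt X i s = Some (c + (size s)%:R * l)].
Proof.
rewrite /csrM => /bigmpadd_eqSome [q [_ _ /mxpow_pow_walk [s [hs hl' hw]]]].
by exists s; split => //; [rewrite hs dvdn_mulr | apply: walk_wt_sublSome].
Qed.

End CycleMean.

Section CSR.
Variables (R : realFieldType) (n : nat) (X : mpmx R n) (l : R).
Hypothesis hl : mplambda X = Some l.
Local Notation g := (crit_cyclicity X).

Lemma crit_node_cycle k : crit_node X k -> exists c : seq 'I_n,
  [/\ is_cycle (arcA X) c, weight X c = (size c)%:R * l, k \in c,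
      {in c, forall y, crit_node X y} & {in arcs c, forall p, crit_arc X p.1 p.2}].
Proof.
case/existsP => kk /existsP [t /andP [/andP [cy /eqP]]]; rewrite hl => -[el] kt.
have cr : crit_cycle X t by rewrite /crit_cycle cy hl el eqxx.
exists t; split=> //.
- by have /and3P [sz _ _] := cy; apply/eqP; rewrite -cmean_eq // el.
- by move=> y yt; apply/existsP; exists kk; apply/existsP; exists t; rewrite cr.
- move=> p pa; apply/existsP; exists kk; apply/existsP; exists t.
  by rewrite cr -surjective_pairing.
Qed.

Lemma crit_closed_walk k : crit_node X k -> exists z : seq 'I_n,
  [/\ last k z = k, (0 < size z)%N, walk_wt (csrS X) k z = Some ((size z)%:R * l)
    & {in z, forall y, crit_node X y}].
Proof.
move=> ck; have [c [cy wc kc ncr acr]] := crit_node_cycle ck.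
have [z [pz lz sz az]] := cycle_closed_walk kc.
have /and3P [szc _ allc] := cy.
exists z; split=> //; first by rewrite sz.
- rewrite -(@eq_walk_wt _ _ X) => [|p pin]; last by rewrite /csrS acr // -(perm_mem az).
  by rewrite walk_wt_zip (perm_all _ az) allc (perm_big _ az) sz -wc.
- by move=> y; rewrite (perm_mem pz); apply: ncr.
Qed.

Lemma crit_cyclicity_gt0 : (0 < g)%N.
Proof.
rewrite /crit_cyclicity; elim/big_ind: _ => // [a b ha hb|i ci]; first by rewrite lcmn_gt0 ha hb.
have [c [cy _ ic _ acr]] := crit_node_cycle ci.
have ha : all (fun p => crit_arc X p.1 p.2) (arcs c) by apply/allP => p /acr.
have [k [t et]] := cycle_tuple cy.
apply: (big_gcdn_gt0 (mem_index_enum k)) => //.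
apply: (big_gcdn_gt0 (i0 := t) (mem_index_enum t)) => //.
have /and3P [szc uc _] := cy.
rewrite et /is_cycle szc uc ha /=.
by apply/allP => y yc; rewrite /scc !(cycle_connect ha).
Qed.

Lemma csrS_restrict i j : csrS X i j = None \/ csrS X i j = X i j.
Proof. by rewrite /csrS; case: (crit_arc X i j); [right|left]. Qed.

Lemma CStR_walk t i j v : CStR X t i j = Some v ->
  exists s k, [/\ last i s = j, k \in i :: s, crit_node X k,
     (size s %% g = t %% g)%N
   & walk_wt X i s = Some (v + (size s)%:R * l - t%:R * l)].
Proof.
rewrite /CStR hl => /mxmul_eqSome [m [a [b [/mxmul_eqSome [k [c1 [c2 [hC hS ->]]]] hR ->]]]].
move: hC; rewrite /csrC; case ck: (crit_node X k) => // /csrM_walk [s1 [d1 l1 w1]].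
move: hR; rewrite /csrR; case: (crit_node X m) => // /csrM_walk [s3 [d3 l3 w3]].
have [r [sr lr /(walk_wt_restrict csrS_restrict) wr]] := mxpow_walk hS.
exists (s1 ++ r ++ s3), k; split=> //.
- by rewrite !last_cat l1 lr l3.
- by rewrite -l1 -cat_cons mem_cat mem_last.
- rewrite !size_cat; move: d1 d3 => /dvdnP [q1 ->] /dvdnP [q3 ->].
  by rewrite sr modnMDl addnC modnMDl.
- rewrite !walk_wt_cat w1 l1 wr lr w3 /=; congr Some.
  by rewrite !size_cat !natrD sr; lra.
Qed.

Lemma crit_closed_walk_long k m : crit_node X k -> exists Y : seq 'I_n,
  [/\ last k Y = k, (g %| size Y)%N, (m <= size Y)%N,
      walk_wt (csrS X) k Y = Some ((size Y)%:R * l) & {in Y, forall y, crit_node X y}].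
Proof.
move=> ck; have [z [lz zp wz crz]] := crit_closed_walk ck.
have [lY wY sY subY] := closed_walk_rep (g * m) lz wz.
exists (flatten (nseq (g * m) z)); split=> //.
- by rewrite sY -mulnA dvdn_mulr.
- by rewrite sY mulnAC leq_pmull // muln_gt0 crit_cyclicity_gt0 zp.
- by rewrite wY sY mulrA -natrM.
- by move=> y /subY; apply: crz.
Qed.

Lemma CStR_ge_cat t i u r v wu wr wv : (g %| size u)%N -> (g %| size v)%N -> size r = t ->
  crit_node X (last i u) -> crit_node X (last (last i u) r) ->
  walk_wt X i u = Some wu -> walk_wt (csrS X) (last i u) r = Some wr ->
  walk_wt X (last (last i u) r) v = Some wv ->
  mple (Some (wu - (size u)%:R * l + wr + (wv - (size v)%:R * l)))
       (CStR X t i (last i (u ++ r ++ v))).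
Proof.
set k := last i u; set m := last k r => gu gv rt ck cm hu hr hv.
rewrite !last_cat -/k -/m /CStR hl.
apply: mple_trans (mxmul_ge _ _ _ m _).
apply: mple_trans (mpmul_mono (mxmul_ge _ _ _ k _) (mple_refl _)).
change (mple (mpmul (mpmul (Some (wu - (size u)%:R * l)) (Some wr))
  (Some (wv - (size v)%:R * l))) (mpmul (mpmul (csrC X l i k) (mxpow (csrS X) t k m))
  (csrR X l m (last m v)))).
apply: mpmul_mono; first apply: mpmul_mono.
- by rewrite /csrC ck; apply: csrM_ge_walk.
- by rewrite -hr -rt; apply: mxpow_ge_walk.
- by rewrite /csrR cm; apply: csrM_ge_walk.
Qed.

(* Splice into the walk, at its critical node, a long critical closed walk
   [P ++ r ++ Q], with [P] padding the prefix to a multiple of [g]. *)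
Lemma CStR_ge_walk t i s k w : walk_wt X i s = Some w -> k \in i :: s -> crit_node X k ->
  (size s %% g = t %% g)%N ->
  mple (Some (w - (size s)%:R * l + t%:R * l)) (CStR X t i (last i s)).
Proof.
move=> hw ks ck hmod; have gp := crit_cyclicity_gt0.
have [s1 [s2 [es ls1]]] := split_at_mem ks; subst s.
move: hw; rewrite walk_wt_cat ls1 => /mpmul_eqSome [w1 [w2 [hw1 hw2 ->]]].
set p := (g - size s1 %% g)%N.
have [Y [lY gY sY wY crY]] := crit_closed_walk_long (p + t) ck.
set P := take p Y; set r := take t (drop p Y); set Q := drop t (drop p Y).
have sP : size P = p by rewrite size_takel //; lia.
have sr : size r = t by rewrite size_takel // size_drop; lia.
have sQ : size Q = (size Y - p - t)%N by rewrite !size_drop.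
have lQ : last (last (last k P) r) Q = k by rewrite -!last_cat !cat_take_drop.
have crPr y : y \in k :: P ++ r -> crit_node X y.
  rewrite in_cons mem_cat => /or3P [/eqP -> //|/mem_take|/mem_take/mem_drop]; exact: crY.
have ck' : crit_node X (last k P) by apply: crPr; rewrite -cat_cons mem_cat mem_last.
have cm' : crit_node X (last (last k P) r).
  by apply: crPr; rewrite -cat_cons -last_cat mem_last.
have eY : Y = P ++ r ++ Q by rewrite !cat_take_drop.
move: wY; rewrite {1}eY 2!walk_wt_cat.
move=> /mpmul_eqSome [aP [_ [hP /mpmul_eqSome [aR [aQ [hR hQ ->]]] eK]]].
have gu : (g %| size (s1 ++ P))%N.
  rewrite size_cat sP /p {1}(divn_eq (size s1) g) -addnA subnKC; last exact/ltnW/ltn_pmod.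
  by rewrite dvdn_add ?dvdn_mull.
have sums : (size (s1 ++ P) + size (Q ++ s2) + t = size (s1 ++ s2) + size Y)%N.
  by rewrite !size_cat sP sQ; move: sY; move: (size s1) (size s2) (size Y) (p) => a b y q; lia.
have gv : (g %| size (Q ++ s2))%N := dvdn_mod_balance gu gY sums hmod.
have wu : walk_wt X i (s1 ++ P) = Some (w1 + aP).
  by rewrite walk_wt_cat ls1 hw1 (walk_wt_restrict csrS_restrict hP).
have wv : walk_wt X (last (last k P) r) (Q ++ s2) = Some (aQ + w2).
  by rewrite walk_wt_cat lQ (walk_wt_restrict csrS_restrict hQ) hw2.
have := CStR_ge_cat (i := i) gu gv sr; rewrite !last_cat ls1 lQ => /(_ _ _ _ ck' cm' wu hR wv).
apply: mple_trans; rewrite /=.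
have : ((size (s1 ++ P))%:R + (size (Q ++ s2))%:R + t%:R) * l
     = ((size (s1 ++ s2))%:R + (size Y)%:R) * l :> R by rewrite -!natrD sums.
by rewrite !mulrDl eK; lra.
Qed.

End CSR.

Section Perturbation.
Variables (R : realFieldType) (n : nat) (A1 A2 : mpmx R n) (l : R).
Hypothesis hA2 : mxlt A2 (CSR A1).
Hypothesis hl1 : mplambda A1 = Some l.
Local Notation A := (mxadd A1 A2).
Local Notation g := (crit_cyclicity A1).

Lemma le_mxaddl i j : mple (A1 i j) (A i j).
Proof. exact: mpaddl. Qed.

Lemma mxadd_arc_cases i j a : A i j = Some a -> A1 i j != Some a -> A2 i j = Some a.
Proof.
rewrite /mxadd; case: (A1 i j) => [x|]; case: (A2 i j) => [y|] //=; last by move=> [->]; rewrite eqxx.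
by rewrite /Num.max; case: ifP => _ [->] //; rewrite eqxx.
Qed.

Lemma A2_arc_detour i j a : A2 i j = Some a -> exists u w,
  [/\ last i u = j, (size u %% g = 1 %% g)%N, walk_wt A1 i u = Some w,
      a - l < w - (size u)%:R * l & exists2 k, k \in i :: u & crit_node A1 k].
Proof.
move=> e; have [h1 h2] := hA2 i j; rewrite e in h1 h2.
case E: (CSR A1 i j) h1 h2 => [d|] //= ad h2.
have {}ad : a < d by rewrite lt_neqAle ad andbT; apply/eqP => ed; move: (h2 (congr1 Some ed)).
have [u [k [lu ku ck mu wu]]] := CStR_walk hl1 E.
exists u, (d + (size u)%:R * l - 1%:R * l); split=> //; last by exists k.
by lra.
Qed.

Definition pure_walk i s := all (fun p => A1 p.1 p.2 == A p.1 p.2) (zip (i :: s) s).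

(* Replace every arc where [A] exceeds [A1] by its detour. *)
Lemma walk_transfer s i x : walk_wt A i s = Some x -> exists s' x',
  [/\ last i s' = last i s, walk_wt A1 i s' = Some x', (size s' %% g = size s %% g)%N,
      x - (size s)%:R * l <= x' - (size s')%:R * l
    & (pure_walk i s /\ s' = s /\ x' = x) \/
      (x - (size s)%:R * l < x' - (size s')%:R * l /\ exists2 k, k \in i :: s' & crit_node A1 k)].
Proof.
elim: s i x => [|j s0 IH] i x /=; first by move=> [<-]; exists [::], 0; split=> //; left.
move=> /mpmul_eqSome [a [x0 [ha hx0 ->]]].
have [s0' [x0' [l0 w0 m0 le0 d0]]] := IH _ _ hx0.
have mS u : (size u %% g = 1 %% g)%N -> (size (u ++ s0') %% g = (size s0).+1 %% g)%N.
  by move=> mu; rewrite size_cat -modnDm mu m0 modnDm add1n.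
case E: (A1 i j == Some a).
  exists (j :: s0'), (a + x0'); split=> //=.
  - by rewrite (eqP E) w0.
  - exact: (mS [:: j]).
  - by move: le0; rewrite !mulrSr; lra.
  case: d0 => [[p0 [-> ->]]|[lt0 [k kin ck]]]; first by left; rewrite /pure_walk /= ha E.
  right; split; first by move: lt0; rewrite !mulrSr; lra.
  by exists k => //; move: kin; rewrite !in_cons => /orP [->|->]; rewrite ?orbT.
have [u [w [lu mu wu lt [k ku ck]]]] := A2_arc_detour (mxadd_arc_cases ha (negbT E)).
have le : a + x0 - (size s0).+1%:R * l < w + x0' - (size (u ++ s0'))%:R * l.
  by move: le0 lt; rewrite size_cat natrD mulrSr mulrDl; lra.
exists (u ++ s0'), (w + x0'); split; last (right; split=> //).
- by rewrite last_cat lu.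
- by rewrite walk_wt_cat wu lu w0.
- exact: mS.
- exact: ltW.
- by exists k => //; move: ku; rewrite -cat_cons mem_cat => ->.
Qed.

Lemma cycle_weight_mxadd_le c : is_cycle (arcA A) c -> weight A c <= (size c)%:R * l /\
  (weight A c = (size c)%:R * l -> {in arcs c, forall p, A1 p.1 p.2 = A p.1 p.2}).
Proof.
move=> cy; have /and3P [sz _ _] := cy.
case: c sz cy => [|y c] // _ cy; set x := last y (y :: c).
have lc : last x (y :: c) = x by [].
have hw : walk_wt A x (y :: c) = Some (weight A (y :: c)) by apply: walk_wt_cycle.
have [s' [x' [l' w' _ le' d']]] := walk_transfer hw.
have cl := closed_walk_wt_le hl1 l' w'.
split; first by move: le' cl; lra.
move=> e; case: d' => [[pu _]|[lt' _]]; last by move: lt' cl; rewrite e; lra.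
move=> p; rewrite -(perm_mem (closed_walk_arcs lc isT)) => pin.
by apply/eqP; move/allP: pu => /(_ p pin).
Qed.

Lemma arcA_mxaddl : subrel (arcA A1) (arcA A).
Proof. by move=> i j; rewrite /arcA /mxadd; case: (A1 i j) => //= a; case: (A2 i j). Qed.

Lemma is_cycle_mxaddl c : is_cycle (arcA A1) c -> is_cycle (arcA A) c.
Proof.
case/and3P => sz u ha; rewrite /is_cycle sz u /=.
by apply/allP => p /(allP ha); apply: arcA_mxaddl.
Qed.

Lemma weight_mxaddl c : is_cycle (arcA A1) c -> weight A1 c <= weight A c.
Proof.
case: c => [|y c] cy; first by case/and3P: cy.
have := @le_walk_wt _ _ A1 A (last y (y :: c)) (y :: c) le_mxaddl.
by rewrite !walk_wt_cycle //; apply: is_cycle_mxaddl.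
Qed.

Lemma mplambda_mxadd : mplambda A = Some l.
Proof.
apply: mple_anti.
  apply: bigmpadd_lub => k _ _; apply: bigmpadd_lub => t _ cy /=.
  have [h _] := cycle_weight_mxadd_le cy; have /and3P [sz _ _] := cy.
  by rewrite /cmean ler_pdivrMr ?ltr0n // mulrC.
move: hl1; rewrite {1}/mplambda => /bigmpadd_eqSome [k [_ _ /bigmpadd_eqSome [t [_ cy [<-]]]]].
apply: mple_trans (cmean_le_mplambda (is_cycle_mxaddl cy)).
by rewrite /= /cmean ler_pM2r ?invr_gt0 ?ltr0n ?size_tuple //; apply: weight_mxaddl.
Qed.

Lemma crit_cycle_mxadd c : crit_cycle A c = crit_cycle A1 c.
Proof.
rewrite /crit_cycle mplambda_mxadd hl1.
apply/andP/andP => -[cy /eqP [e]]; have /and3P [sz u ha] := cy.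
- have [_ pu] := cycle_weight_mxadd_le cy.
  have {}pu : {in arcs c, forall p, A1 p.1 p.2 = A p.1 p.2}.
    by apply: pu; apply/eqP; rewrite -cmean_eq // e.
  have cy1 : is_cycle (arcA A1) c.
    by rewrite /is_cycle sz u /=; apply/allP => p pin; rewrite /arcA pu //; apply: (allP ha).
  have eW : weight A1 c = weight A c by apply: eq_big_seq => p pin; rewrite pu.
  by split=> //; apply/eqP; congr Some; apply/eqP; rewrite cmean_eq // eW -cmean_eq // e.
- have [le1 _] := cycle_weight_mxadd_le (is_cycle_mxaddl cy).
  have ew1 : weight A1 c = (size c)%:R * l by apply/eqP; rewrite -cmean_eq // e.
  split; first exact: is_cycle_mxaddl.
  by apply/eqP; congr Some; apply/eqP; rewrite cmean_eq // eq_le le1 -ew1 weight_mxaddl.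
Qed.

Lemma crit_node_mxadd i : crit_node A i = crit_node A1 i.
Proof. by apply: eq_existsb => k; apply: eq_existsb => t; rewrite crit_cycle_mxadd. Qed.

Lemma crit_arc_mxadd i j : crit_arc A i j = crit_arc A1 i j.
Proof. by apply: eq_existsb => k; apply: eq_existsb => t; rewrite crit_cycle_mxadd. Qed.

Lemma crit_cyclicity_mxadd : crit_cyclicity A = g.
Proof.
have eN : crit_node A = crit_node A1.
  by apply: functional_extensionality => i; apply: crit_node_mxadd.
have eA : crit_arc A = crit_arc A1.
  by do 2 apply: functional_extensionality => ?; apply: crit_arc_mxadd.
by rewrite /crit_cyclicity eN eA.
Qed.

Lemma CStR_mxadd t i j : CStR A t i j = CStR A1 t i j.
Proof.
apply: mple_anti.
- case E: (CStR A t i j) => [v|] //.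
  have [s [k [ls ks ck ms ws]]] := CStR_walk mplambda_mxadd E.
  have [s' [x' [l' w' m' le' d']]] := walk_transfer ws.
  have [k1 k1in ck1] : exists2 k1, k1 \in i :: s' & crit_node A1 k1.
    by case: d' => [[_ [-> _]]|[_ h]] //; exists k; rewrite -?crit_node_mxadd.
  have ms' : (size s' %% g = t %% g)%N by rewrite m' -crit_cyclicity_mxadd.
  rewrite -ls -l'; apply: mple_trans _ (CStR_ge_walk hl1 w' k1in ck1 ms') => /=.
  by move: le'; lra.
- case E: (CStR A1 t i j) => [v|] //.
  have [s [k [ls ks ck ms ws]]] := CStR_walk hl1 E.
  have := @le_walk_wt _ _ A1 A i s le_mxaddl; rewrite ws.
  case ws': (walk_wt A i s) => [w'|] // le.
  have ck' : crit_node A k by rewrite crit_node_mxadd.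
  have ms' : (size s %% crit_cyclicity A = t %% crit_cyclicity A)%N.
    by rewrite crit_cyclicity_mxadd.
  rewrite -ls; apply: mple_trans _ (CStR_ge_walk mplambda_mxadd ws' ks ck' ms') => /=.
  by move: le => /=; lra.
Qed.

Lemma walk_wt_dominated t i s x : size s = t -> walk_wt A i s = Some x ->
  mple (Some x) (walk_wt A1 i s) /\ pure_walk i s \/
  exists2 v, CStR A1 t i (last i s) = Some v & x < v.
Proof.
move=> st ws; have [s' [x' [l' w' m' le' d']]] := walk_transfer ws.
case: d' => [[pu [es ex]]|[lt' [k kin ck]]].
  by left; split=> //; rewrite -es w' ex /= lexx.
right; have ms' : (size s' %% g = t %% g)%N by rewrite m' st.
have := CStR_ge_walk hl1 w' kin ck ms'; rewrite l'.
case: (CStR A1 t i (last i s)) => [v|] //= hv; exists v => //.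
by move: lt' hv; rewrite st; lra.
Qed.

Lemma mxpow_mxadd_dominated t i j :
  dominated (CStR A1 t i j) (mxpow A t i j) (mxpow A1 t i j).
Proof.
move=> x /mxpow_walk [s [st <- ws]].
case: (walk_wt_dominated st ws) => [[h _]|]; last by right.
by left; apply: mple_trans h (mxpow_ge_walk _ _ st).
Qed.

Lemma BN_restrict (X : mpmx R n) i j : BN X i j = None \/ BN X i j = X i j.
Proof. by rewrite /BN; case: ifP; [left|right]. Qed.

Lemma BN_mxpow_mxadd_dominated t i j :
  dominated (CStR A1 t i j) (mxpow (BN A) t i j) (mxpow (BN A1) t i j).
Proof.
move=> x /mxpow_walk [s [st <- ws]].
case: (walk_wt_dominated st (walk_wt_restrict (@BN_restrict _) ws)) => [[_ pu]|]; last by right.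
left; apply: mple_trans (mxpow_ge_walk _ _ st).
rewrite -ws (@eq_walk_wt _ _ _ (BN A)) ?mple_refl // => p pin.
by rewrite /BN !crit_node_mxadd (eqP (allP pu p pin)).
Qed.

Lemma BN_le (X : mpmx R n) i j : mple (BN X i j) (X i j).
Proof. by rewrite /BN; case: ifP => _ //; apply: mple_refl. Qed.

Lemma BN_mxaddl i j : mple (BN A1 i j) (BN A i j).
Proof. by rewrite /BN !crit_node_mxadd; case: ifP => _ //; apply: le_mxaddl. Qed.

Lemma csr_from_mxadd T : csr_from A T <-> csr_from A1 T.
Proof.
have step t i j : mxpow A t i j = mpadd (CStR A t i j) (mxpow (BN A) t i j) <->
    mxpow A1 t i j = mpadd (CStR A1 t i j) (mxpow (BN A1) t i j).
  rewrite CStR_mxadd; apply: eq_mpadd_dominated.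
  - exact: le_mxpow le_mxaddl.
  - exact: le_mxpow BN_mxaddl.
  - exact: le_mxpow (BN_le A1).
  - exact: le_mxpow (BN_le A).
  - exact: mxpow_mxadd_dominated.
  - exact: BN_mxpow_mxadd_dominated.
by split=> h t tT i j; apply/step; apply: h.
Qed.

End Perturbation.

Lemma mxadd_CSR_bot (R : realFieldType) (n : nat) (A1 A2 : mpmx R n) :
  mplambda A1 = None -> mxlt A2 (CSR A1) -> mxadd A1 A2 = A1.
Proof.
move=> hl hA2; apply: functional_extensionality => i; apply: functional_extensionality => j.
have [] := hA2 i j; rewrite /CSR /CStR hl /mxbot /mxadd.
by case: (A2 i j); case: (A1 i j).
Qed.

Theorem lemmal (R : realFieldType) (n : nat) (A1 A2 : mpmx R n) :
  mxlt A2 (CSR A1) ->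
  let A := mxadd A1 A2 in
  [/\ mplambda A = mplambda A1,
      (forall i, crit_node A i = crit_node A1 i)
        /\ (forall i j, crit_arc A i j = crit_arc A1 i j),
      (forall t, (1 <= t)%N -> forall i j, CStR A t i j = CStR A1 t i j)
    & (forall T, is_T1 A T <-> is_T1 A1 T)].
Proof.
move=> hA2 A; rewrite {}/A.
case hl: (mplambda A1) => [l|]; last by rewrite (mxadd_CSR_bot hl hA2).
have csr T := csr_from_mxadd hA2 hl T.
split.
- exact: mplambda_mxadd hA2 hl.
- by split; [apply: crit_node_mxadd hA2 hl | apply: crit_arc_mxadd hA2 hl].
- by move=> t _ i j; apply: CStR_mxadd hA2 hl t i j.
- move=> T; split=> -[h1 h2]; split=> [|T' hT'].
  + exact: (csr T).1 h1.
  + exact: h2 ((csr T').2 hT').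
  + exact: (csr T).2 h1.
  + exact: h2 ((csr T').1 hT').
Qed.
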